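(* For every $q\in\mathbb{K}$, $(\mathcal{M}MR(q),\succ_q,\cdot_q,\prec_q)$ is a $q$-tridendriform algebra.
   Context: An $\mathcal M$-permutation (big multi-permutation) of $n$ is an ordered sequence $B=(B_1,\dots,B_m)$ of nonempty pairwise disjoint subsets of $[n]$ with union $[n]$ such that for every $1\le i\le n-1$, $i$ and $i+1$ do not lie in the same block. $S^{\mathcal M}_n$ is their set and $\mathcal MMR=\bigoplus_{n\ge1}\mathbb{K}[S^{\mathcal M}_n]$. Restriction: for an ordered set partition $W=(W_1,\dots,W_l)$ and a set $J$, $W|_J$ is $(W_1\cap J,\dots,W_l\cap J)$ with empty blocks deleted. $\mathcal M$-standardization: for an ordered sequence $C=(C_1,\dots,C_p)$ of nonempty pairwise disjoint finite subsets of $\mathbb{Z}_{>0}$, let $s_1<\dots<s_k$ be the elements of $\bigcup C_c$, let $w$ be the word with $w(t)=c$ iff $s_t\in C_c$, let $w'$ (of length $l$) be obtained from $w$ by deleting every letter equal to the letter immediately preceding it; then $\mathrm{std}_{\mathcal M}(C)=(w'^{-1}(1),\dots,w'^{-1}(p))\in S^{\mathcal M}_l$. (E.g. $\mathrm{std}_{\mathcal M}[(1,6,7),(2,3),5,4]=[(1,5),2,4,3]$, $\mathrm{std}_{\mathcal M}[(1,3)]=[1]$.) Products: let $B\in S^{\mathcal M}_n$, $D\in S^{\mathcal M}_m$. Let $\mathcal W(B,D)$ be the set of pairs $(W,S)$ where either (I) $W\in S^{\mathcal M}_{n+m}$, $S=\{n+1,\dots,n+m\}$, or (II) $W\in S^{\mathcal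 M}_{n+m-1}$, $S=\{n,\dots,n+m-1\}$, and in both cases $W|_{[n]}=B$ and $\mathrm{std}_{\mathcal M}(W|_S)=D$. For $W=(W_1,\dots,W_l)$ let $\cap^W_{B,D}$ be the number of blocks $W_j$ with $W_j\cap[n]\neq\emptyset$ and $W_j\cap S\neq\emptyset$. Then $B\succ_qD=\sum q^{\cap^W_{B,D}}W$ over $(W,S)\in\mathcal W(B,D)$ with $W_l\cap[n]=\emptyset$; $B\cdot_qD=\sum q^{\cap^W_{B,D}-1}W$ over those with $W_l\cap[n]\ne\emptyset$ and $W_l\cap S\ne\emptyset$; $B\prec_qD=\sum q^{\cap^W_{B,D}}W$ over those with $W_l\cap S=\emptyset$. $\mathcal MMR(q)$ denotes $\mathcal MMR$ with these products. $q$-tridendriform algebra: bilinear $\prec,\cdot,\succ$ with (1) $(a\prec b)\prec c=a\prec(b\prec c+b\succ c+q\,b\cdot c)$; (2) $(a\succ b)\prec c=a\succ(b\prec c)$; (3) $(a\prec b+a\succ b+q\,a\cdot b)\succ c=a\succ(b\succ c)$; (4) $(a\cdot b)\cdot c=a\cdot(b\cdot c)$; (5) $(a\succ b)\cdot c=a\succ(b\cdot c)$; (6) $(a\prec b)\cdot c=a\cdot(b\succ c)$; (7) $(a\cdot b)\prec c=a\cdot(b\prec c)$. *)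

From HB Require Import structures.
From mathcomp Require Import all_boot all_order all_algebra.
Set Implicit Arguments. Unset Strict Implicit. Unset Printing Implicit Defensive.
Import GRing.Theory.
Local Open Scope ring_scope.

(* A block is a finite subset of Z_{>0}, represented by its strictly
   increasing list of elements; an ordered sequence of blocks is a
   seq of blocks. *)
Definition blk := seq nat.
Definition mperm := seq blk.

Definition is_mperm (n : nat) (B : mperm) : bool :=
  [&& all (fun b => b != [::]) B,
      all (sorted ltn) B,
      uniq (flatten B),
      sort leq (flatten B) == iota 1 n &
      all (fun b => all (fun i => i.+1 \notin b) b) B ].

Definition msize (B : mperm) : nat := size (flatten B).

(* basis elements of MMR = (+)_{n>=1} K[S^M_n] *)
Definition is_basis (B : mperm) : bool := (0 < msize B)%N && is_mperm (msize B) B.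

Fixpoint subseqs (s : seq nat) : seq (seq nat) :=
  match s with
  | [::] => [:: [::]]
  | x :: s' => let r := subseqs s' in [seq x :: t | t <- r] ++ r
  end.
Fixpoint lists (k : nat) (xs : seq blk) : seq mperm :=
  match k with
  | 0 => [:: [::]]
  | k'.+1 => [seq x :: t | x <- xs, t <- lists k' xs]
  end.
Definition mperms (N : nat) : seq mperm :=
  undup [seq B <- flatten [seq lists k (subseqs (iota 1 N)) | k <- iota 0 N.+1]
        | is_mperm N B].

Definition restrict (W : mperm) (J : pred nat) : mperm :=
  [seq b <- [seq [seq x <- b | J x] | b <- W] | b != [::]].

Fixpoint dedup_adj (w : seq nat) : seq nat :=
  match w with
  | x :: ((y :: _) as w') => if x == y then dedup_adj w' else x :: dedup_adj w'
  | _ => w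
  end.

(* M-standardization (letters of w are 0-based block indices) *)
Definition stdM (C : mperm) : mperm :=
  let s := sort leq (flatten C) in
  let w := [seq find (fun b => x \in b) C | x <- s] in
  let w' := dedup_adj w in
  [seq [seq i.+1 | i <- iota 0 (size w') & nth 0%N w' i == c] | c <- iota 0 (size C)].

(* Elements of MMR: finite formal K-linear combinations of M-permutations. *)
Definition alg (K : fieldType) := seq (K * mperm).
Definition coef (K : fieldType) (x : alg K) (W : mperm) : K :=
  \sum_(p <- x | p.2 == W) p.1.
Definition aeq (K : fieldType) (x y : alg K) : Prop := forall W, coef x W = coef y W.
Definition valid (K : fieldType) (x : alg K) : bool := all (fun p => is_basis p.2) x.
Definition aadd (K : fieldType) (x y : alg K) : alg K := x ++ y.
Definition ascale (K : fieldType) (k : K) (x : alg K) : alg K :=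
  [seq (k * p.1, p.2) | p <- x].
Definition bilin (K : fieldType) (f : mperm -> mperm -> alg K) (x y : alg K) : alg K :=
  flatten [seq [seq (p.1 * r.1 * t.1, t.2) | t <- f p.2 r.2] | p <- x, r <- y].

Definition Wset (B D : mperm) : seq (mperm * pred nat) :=
  let n := msize B in let m := msize D in
  let SI := (fun x => (n < x <= n + m)%N) : pred nat in
  let SII := (fun x => (n <= x <= n + m - 1)%N) : pred nat in
  [seq (W, SI) | W <- mperms (n + m) &
       (restrict W (fun x => (x <= n)%N) == B) && (stdM (restrict W SI) == D)] ++
  [seq (W, SII) | W <- mperms (n + m - 1) &
       (restrict W (fun x => (x <= n)%N) == B) && (stdM (restrict W SII) == D)].

Definition capn (n : nat) (W : mperm) (S : pred nat) : nat :=
  count (fun b => has (fun x => (x <= n)%N) b && has S b) W.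

Definition lastblk (W : mperm) : blk := last [::] W.

Definition succ_b (K : fieldType) (q : K) (B D : mperm) : alg K :=
  [seq (q ^+ capn (msize B) WS.1 WS.2, WS.1) | WS <- Wset B D &
     ~~ has (fun x => (x <= msize B)%N) (lastblk WS.1)].
Definition dot_b (K : fieldType) (q : K) (B D : mperm) : alg K :=
  [seq (q ^+ (capn (msize B) WS.1 WS.2 - 1), WS.1) | WS <- Wset B D &
     has (fun x => (x <= msize B)%N) (lastblk WS.1) && has WS.2 (lastblk WS.1)].
Definition prec_b (K : fieldType) (q : K) (B D : mperm) : alg K :=
  [seq (q ^+ capn (msize B) WS.1 WS.2, WS.1) | WS <- Wset B D &
     ~~ has WS.2 (lastblk WS.1)].

Definition succ_q (K : fieldType) (q : K) := bilin (succ_b q).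
Definition dot_q (K : fieldType) (q : K) := bilin (dot_b q).
Definition prec_q (K : fieldType) (q : K) := bilin (prec_b q).

Definition q_tridendriform (K : fieldType) (A : Type) (validA : A -> Prop)
  (eqA : A -> A -> Prop) (add : A -> A -> A) (scale : K -> A -> A) (q : K)
  (prec dot succ : A -> A -> A) : Prop :=
  forall a b c, validA a -> validA b -> validA c ->
  (eqA (prec (prec a b) c) (prec a (add (add (prec b c) (succ b c)) (scale q (dot b c)))))
   /\ (eqA (prec (succ a b) c) (succ a (prec b c)))
   /\ (eqA (succ (add (add (prec a b) (succ a b)) (scale q (dot a b))) c) (succ a (succ b c)))
   /\ (eqA (dot (dot a b) c) (dot a (dot b c)))
   /\ (eqA (dot (succ a b) c) (succ a (dot b c)))
   /\ (eqA (dot (prec a b) c) (dot a (succ b c)))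
   /\ (eqA (prec (dot a b) c) (dot a (prec b c))).

From mathcomp Require Import all_boot all_order all_algebra zify.
Set Implicit Arguments. Unset Strict Implicit. Unset Printing Implicit Defensive.
Import GRing.Theory.

(* Each of the three products sums, over the pairs (W, S) of W(B, D), a weight that
   only depends on whether the last block of W meets [n], whether it meets S, and on
   the number of blocks meeting both.  In an iterated product the intermediate term is
   determined by the final W: it is W|_[t] in (B * C) * D and std(W|_S) in B * (C * D),
   and the choices of type (I)/(II) at the two levels correspond on both sides.  Since
   standardizing blocks that fill an interval is a mere translation, all the
   restriction and standardization conditions agree, and counting blocks by the three
   ranges [1, n], [n+1, n+m], [n+m+1, n+m+p] (up to the shared endpoints of type (II))
   relates the intersection numbers; each axiom then reduces to a finite check on the
   weights. *)

Definition between (s e : nat) : pred nat := fun x => s <= x <= e.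

Definition shift_down (k : nat) (W : mperm) : mperm := map (map (fun x => x - k)) W.

Definition window (s e : nat) (W : mperm) : mperm :=
  shift_down s.-1 (restrict W (between s e)).

Lemma restrict_ext_in W (P Q : pred nat) :
  {in flatten W, P =1 Q} -> restrict W P = restrict W Q.
Proof.
move=> PQ; rewrite /restrict; congr filter; apply/eq_in_map => b bW.
by apply/eq_in_filter => x xb; apply: PQ; apply/flattenP; exists b.
Qed.

Lemma restrict_ext W (P Q : pred nat) : P =1 Q -> restrict W P = restrict W Q.
Proof. by move=> PQ; apply: restrict_ext_in => x _; apply: PQ. Qed.

Lemma restrict_cons b W P : restrict (b :: W) P =
  if filter P b == [::] then restrict W P else filter P b :: restrict W P.
Proof. by rewrite /restrict /=; case: (filter P b == [::]). Qed.

Lemma restrict_restrict W P Q : restrict (restrict W P) Q = restrict W (predI Q P).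
Proof.
elim: W => [|b W IH] //; rewrite [restrict (b :: W) P]restrict_cons.
rewrite [RHS]restrict_cons filter_predI.
by case: eqP => [->|_] /=; rewrite ?restrict_cons IH.
Qed.

Lemma flatten_restrict W P : flatten (restrict W P) = filter P (flatten W).
Proof.
elim: W => [|b W IH] //; rewrite restrict_cons /= filter_cat.
by case: eqP => [->|_] //=; rewrite IH.
Qed.

Lemma mem_restrict W P c : c \in restrict W P -> exists2 b, b \in W & c = filter P b.
Proof. by rewrite mem_filter => /andP [_ /mapP [b bW ->]]; exists b. Qed.

Lemma count_restrict (f : blk -> bool) W P : f [::] = false ->
  count f (restrict W P) = count (fun b => f (filter P b)) W.
Proof.
move=> f0; elim: W => [|b W IH] //; rewrite restrict_cons.
by case: eqP => [E|_] /=; rewrite IH // E f0.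
Qed.

Lemma flatten_shift_down k W :
  flatten (shift_down k W) = map (fun x => x - k) (flatten W).
Proof. by rewrite /shift_down map_flatten. Qed.

Lemma shift_downD a b W : shift_down a (shift_down b W) = shift_down (a + b) W.
Proof.
rewrite /shift_down -map_comp; apply: eq_map => c /=; rewrite -map_comp.
by apply: eq_map => x /=; rewrite -subnDA addnC.
Qed.

Lemma shift_down0 W : shift_down 0 W = W.
Proof.
rewrite /shift_down -[RHS]map_id; apply: eq_map => b.
by rewrite -[RHS]map_id; apply: eq_map => x; rewrite subn0.
Qed.

Lemma restrict_shift_down k W P :
  restrict (shift_down k W) P = shift_down k (restrict W (fun x => P (x - k))).
Proof.
elim: W => [|b W IH] //=; rewrite [LHS]restrict_cons IH (restrict_cons b) filter_map.
by case: (filter _ b).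
Qed.

Lemma mem_shift_down k W c :
  c \in shift_down k W -> exists2 b, b \in W & c = map (fun x => x - k) b.
Proof. by move=> /mapP [b bW ->]; exists b. Qed.

Lemma has_filter_and (P Q : pred nat) b : has Q (filter P b) = has (predI P Q) b.
Proof. by elim: b => [|x b IH] //=; case: (P x); rewrite /= IH. Qed.

Lemma lastblk_restrict W P :
  has P (lastblk W) -> lastblk (restrict W P) = filter P (lastblk W).
Proof.
case/lastP: W => [|W b] //; rewrite /lastblk last_rcons => hb.
by rewrite /restrict map_rcons filter_rcons -has_filter hb last_rcons.
Qed.

Lemma lastblk_shift_down k W :
  lastblk (shift_down k W) = map (fun x => x - k) (lastblk W).
Proof. by rewrite /lastblk /shift_down (last_map (map (fun x => x - k)) W [::]). Qed.

Lemma mem_lastblk W : W != [::] -> lastblk W \in W.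
Proof. by case: W => [|b W] // _; rewrite /lastblk /=; apply: mem_last. Qed.

Lemma capn_gt0 n W S :
  has (fun x => x <= n) (lastblk W) -> has S (lastblk W) -> 0 < capn n W S.
Proof.
move=> h1 h2; rewrite /capn -has_count; apply/hasP; exists (lastblk W); last by rewrite h1 h2.
by apply: mem_lastblk; case: W h1 {h2}.
Qed.

Definition well_formed (B : mperm) : bool :=
  [&& all (fun b => b != [::]) B, all (sorted ltn) B, uniq (flatten B) &
      all (fun b => all (fun i => i.+1 \notin b) b) B].

Definition mperm_of (N : nat) (B : mperm) : Prop :=
  well_formed B /\ forall x, (x \in flatten B) = (0 < x <= N).

Lemma perm_flatten_iota N B : mperm_of N B -> perm_eq (flatten B) (iota 1 N).
Proof.
case=> /and4P [_ _ U _] M.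
by apply: uniq_perm => // [|x]; rewrite ?iota_uniq // M mem_iota; lia.
Qed.

Lemma is_mpermP N B : reflect (mperm_of N B) (is_mperm N B).
Proof.
apply: (iffP idP) => [/and5P [H1 H2 H3 /eqP H4 H5] | HB].
  split=> [|x]; first by rewrite /well_formed H1 H2 H3 H5.
  by rewrite -(perm_mem (permEl (perm_sort leq (flatten B)))) H4 mem_iota; lia.
have := HB; case=> /and4P [H1 H2 H3 H5] _; rewrite /is_mperm H1 H2 H3 H5 /= andbT.
rewrite -(sorted_sort leq_trans (iota_sorted 1 N)); apply/eqP/perm_sortP.
- exact: leq_total.
- exact: leq_trans.
- exact: anti_leq.
- exact: perm_flatten_iota.
Qed.

Lemma msize_mperm_of N B : mperm_of N B -> msize B = N.
Proof. by move/perm_flatten_iota/perm_size; rewrite size_iota. Qed.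

Lemma well_formed_restrict W P : well_formed W -> well_formed (restrict W P).
Proof.
case/and4P => H1 H2 H3 H5; apply/and4P; split.
- by rewrite /restrict all_filter; apply/allP => c _; apply/implyP.
- apply/allP => c /mem_restrict [b bW ->].
  by apply: sorted_filter; [exact: ltn_trans | exact: (allP H2)].
- by rewrite flatten_restrict filter_uniq.
- apply/allP => c /mem_restrict [b bW ->]; apply/allP => i.
  rewrite !mem_filter => /andP [_ ib]; apply/negP => /andP [_ i1b].
  by move/allP: H5 => /(_ b bW) /allP /(_ i ib); rewrite i1b.
Qed.

Lemma well_formed_shift_down k W :
  well_formed W -> all (fun x => k < x) (flatten W) -> well_formed (shift_down k W).
Proof.
case/and4P => H1 H2 H3 H5 Hk.
have kW b x : b \in W -> x \in b -> k < x.
  by move=> bW xb; apply: (allP Hk); apply/flattenP; exists b.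
apply/and4P; split.
- apply/allP => c /mem_shift_down [b bW ->].
  by rewrite -size_eq0 size_map size_eq0 (allP H1).
- apply/allP => c /mem_shift_down [b bW ->].
  rewrite sorted_map; apply: (sub_in_sorted (P := fun x => k < x)); last exact: (allP H2).
    by move=> x y kx ky; rewrite /relpre /= /in_mem /= in kx ky *; lia.
  by apply/allP => x; apply: kW.
- rewrite flatten_shift_down map_inj_in_uniq // => x y xW yW /=.
  by move: (allP Hk x xW) (allP Hk y yW); lia.
- apply/allP => c /mem_shift_down [b bW ->]; apply/allP => _ /mapP [x xb ->].
  apply/negP => /mapP [y yb E].
  have /eqP Ey : y == x.+1 by move: (kW b x bW xb) (kW b y bW yb); lia.
  by move/allP: H5 => /(_ b bW) /allP /(_ x xb); rewrite -Ey yb.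
Qed.

Lemma lastblk_mperm_of N W : mperm_of N W -> 0 < N -> exists2 x, x \in lastblk W & x <= N.
Proof.
case=> /and4P [G1 _ _ _] M N0.
have : 1 \in flatten W by rewrite M; lia.
case: W G1 M => [|b W] // G1 M _.
have Wlast : lastblk (b :: W) \in b :: W by apply: mem_lastblk.
case E: (lastblk (b :: W)) (allP G1 _ Wlast) => [|x l] // _.
exists x; first exact: mem_head.
suff : x \in flatten (b :: W) by rewrite M => /andP [].
by apply/flattenP; exists (lastblk (b :: W)); rewrite // E mem_head.
Qed.

Lemma mem_subseqs s b : (b \in subseqs s) = subseq b s.
Proof.
elim: s b => [|x s IH] b /=; first by case: b.
rewrite mem_cat IH; case: b => [|y b] /=; first by rewrite sub0seq orbT.
case: eqP => [<-|ne].
  apply/idP/idP => [/orP [/mapP [t] | ] | H].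
  - by rewrite IH => st [->].
  - by apply: subseq_trans; apply: subseq_cons.
  - by apply/orP; left; apply/mapP; exists b; rewrite ?IH.
by apply/idP/idP => [/orP [/mapP [t _] [E] | //] | ->]; [case: ne | rewrite orbT].
Qed.

Lemma mem_lists k xs t : (t \in lists k xs) = (size t == k) && all (mem xs) t.
Proof.
elim: k t => [|k IH] t /=; first by case: t.
apply/allpairsPdep/idP => [[x [u [xs1 ut ->]]] | ].
  by move: ut; rewrite IH /= xs1 => /andP [/eqP -> ->]; rewrite eqxx.
case: t => [|x t] //= /andP [sz /andP [xx al]].
by exists x, t; rewrite IH al andbT.
Qed.

Lemma size_le_flatten (B : mperm) :
  all (fun b => b != [::]) B -> size B <= size (flatten B).
Proof.
elim: B => [|b B IH] //= /andP [nb /IH]; rewrite size_cat.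
by case: b nb => // x b _; rewrite /=; lia.
Qed.

Lemma block_subseq_iota N B b : mperm_of N B -> b \in B -> subseq b (iota 1 N).
Proof.
case=> /and4P [_ S _ _] M bB.
suff -> : b = filter (mem b) (iota 1 N) by apply: filter_subseq.
apply: (irr_sorted_eq ltn_trans ltnn (allP S b bB)).
  by apply: sorted_filter; [exact: ltn_trans | exact: iota_ltn_sorted].
move=> x; rewrite mem_filter mem_iota /=.
case xb: (x \in b) => //=.
have : x \in flatten B by apply/flattenP; exists b.
by rewrite M; lia.
Qed.

Lemma mem_mperms N B : (B \in mperms N) = is_mperm N B.
Proof.
rewrite /mperms mem_undup mem_filter; case/boolP: (is_mperm N B) => // /is_mpermP H.
apply/flattenP; exists (lists (size B) (subseqs (iota 1 N))).
  apply/mapP; exists (size B) => //; rewrite mem_iota add0n ltnS -(msize_mperm_of H).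
  by apply: size_le_flatten; case: H => /and4P [].
rewrite mem_lists eqxx /=; apply/allP => b bB /=; rewrite mem_subseqs.
exact: block_subseq_iota H bB.
Qed.

Lemma mperm_ofP N B : reflect (mperm_of N B) (B \in mperms N).
Proof. by rewrite mem_mperms; apply: is_mpermP. Qed.

Lemma uniq_mperms N : uniq (mperms N).
Proof. exact: undup_uniq. Qed.

Lemma dedup_adj_id (w : seq nat) : sorted (fun a b => a != b) w -> dedup_adj w = w.
Proof.
elim: w => [|x [|y w] IH] // /andP [xy H].
have -> : dedup_adj [:: x, y & w] = x :: dedup_adj (y :: w) by rewrite /= (negbTE xy).
by rewrite IH.
Qed.

Lemma sorted_neq_map_iota (f : nat -> nat) s L :
  (forall i, s <= i -> i.+1 < s + L -> f i != f i.+1) ->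
  sorted (fun a b => a != b) (map f (iota s L)).
Proof.
elim: L s => [|[|L] IH] s H //=.
apply/andP; split; first by apply: H; lia.
by apply: (IH s.+1) => i si hi; apply: H; lia.
Qed.

Lemma mem_flatten_nth (C : mperm) c x : x \in nth [::] C c -> x \in flatten C.
Proof.
case: (ltnP c (size C)) => [cs|cs]; last by rewrite nth_default.
by move=> xb; apply/flattenP; exists (nth [::] C c) => //; apply: mem_nth.
Qed.

Lemma find_block (C : mperm) x c : uniq (flatten C) -> x \in flatten C -> c < size C ->
  (find (fun b => x \in b) C == c) = (x \in nth [::] C c).
Proof.
elim: C c => [|b C IH] c //=; rewrite cat_uniq => /and3P [_ dis U] xC cs.
case xb: (x \in b).
  case: c cs => [|c] cs //=; apply/esym/negP => /mem_flatten_nth xC'.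
  by move/hasP: dis; apply; exists x.
rewrite mem_cat xb /= in xC.
by case: c cs => [|c] cs //=; rewrite eqSS IH.
Qed.

Section StandardizeInterval.
Variables (C : mperm) (s e : nat).
Hypotheses (s_gt0 : 0 < s) (wfC : well_formed C)
  (memC : forall x, (x \in flatten C) = (s <= x <= e)).

Local Notation L := (e.+1 - s).
Local Notation blk_of x := (find (fun b => x \in b) C).

Lemma sort_flatten_interval : sort leq (flatten C) = iota s L.
Proof.
case/and4P: wfC => _ _ U _.
rewrite -(sorted_sort leq_trans (iota_sorted s L)).
apply/perm_sortP; [exact: leq_total | exact: leq_trans | exact: anti_leq |].
by apply: uniq_perm; rewrite ?iota_uniq // => x; rewrite memC mem_iota; lia.
Qed.

Lemma blk_of_lt x : s <= x <= e -> blk_of x < size C.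
Proof. by rewrite -memC -has_find => /flattenP [b bC xb]; apply/hasP; exists b. Qed.

Lemma mem_nth_blk_of x : s <= x <= e -> x \in nth [::] C (blk_of x).
Proof.
by move=> xse; apply: (@nth_find _ [::] (fun b => x \in b)); rewrite has_find blk_of_lt.
Qed.

(* Consecutive integers never share a block, so no letter of the word is deleted. *)
Lemma dedup_adj_blk_of : dedup_adj (map (fun x => blk_of x) (iota s L)) =
  map (fun x => blk_of x) (iota s L).
Proof.
case/and4P: wfC => _ _ _ noadj.
apply: dedup_adj_id; apply: sorted_neq_map_iota => i si hi; apply/eqP => E.
have ie : s <= i <= e by lia.
have i1b : i.+1 \in nth [::] C (blk_of i) by rewrite E; apply: mem_nth_blk_of; lia.
have /allP /(_ i (mem_nth_blk_of ie)) := allP noadj _ (mem_nth [::] (blk_of_lt ie)).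
by rewrite i1b.
Qed.

Lemma stdM_interval : stdM C = shift_down s.-1 C.
Proof.
case/and4P: wfC => _ sortedC U _.
rewrite /stdM sort_flatten_interval dedup_adj_blk_of size_map size_iota.
rewrite /shift_down -[in RHS](mkseq_nth [::] C) /mkseq -map_comp.
apply/eq_in_map => c; rewrite mem_iota add0n => /= cs.
apply: (irr_sorted_eq ltn_trans ltnn).
- rewrite sorted_map; apply: (sub_sorted _ (sorted_filter ltn_trans _ (iota_ltn_sorted 0 L))).
  by move=> x y; rewrite /relpre.
- rewrite sorted_map; apply: (sub_in_sorted (P := fun x => s <= x) (e := ltn)).
  + by move=> x y sx sy; rewrite /relpre /= /in_mem /= in sx sy *; lia.
  + by apply/allP => x /mem_flatten_nth; rewrite memC => /andP [].
  + exact/(allP sortedC)/mem_nth.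
move=> y; apply/mapP/mapP => [[i] | [x xb ->]].
  rewrite mem_filter mem_iota add0n => /andP [/eqP fc iL] ->.
  exists (s + i); last by lia.
  rewrite (nth_map 0) ?size_iota // nth_iota // in fc.
  by rewrite -(find_block U _ cs) ?fc ?memC //; lia.
have xse : s <= x <= e by rewrite -memC; apply: mem_flatten_nth xb.
exists (x - s); last by lia.
rewrite mem_filter mem_iota add0n (nth_map 0) ?size_iota ?nth_iota; try lia.
rewrite subnKC; last by lia.
by rewrite (find_block U _ cs) ?memC ?xb //; lia.
Qed.

End StandardizeInterval.

Section Windows.
Variables (N : nat) (W : mperm).
Hypothesis mpW : mperm_of N W.

Lemma mem_flatten_restrict_between s e x :
  e <= N -> (x \in flatten (restrict W (between s e))) = (0 < x) && (s <= x <= e).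
Proof.
by case: mpW => _ M eN; rewrite flatten_restrict mem_filter M /between; lia.
Qed.

Lemma window_mperm_of s e : 0 < s -> s <= e.+1 -> e <= N -> mperm_of (e.+1 - s) (window s e W).
Proof.
move=> s0 se eN; have wfW := mpW.1; split.
  apply: well_formed_shift_down; first exact: well_formed_restrict.
  by apply/allP => x; rewrite mem_flatten_restrict_between //; lia.
move=> x; rewrite /window flatten_shift_down; apply/mapP/idP => [[y] | xL].
  by rewrite mem_flatten_restrict_between // => ? ->; lia.
by exists (x + s.-1); rewrite ?mem_flatten_restrict_between //; lia.
Qed.

Lemma stdM_restrict_between s e :
  0 < s -> e <= N -> stdM (restrict W (between s e)) = window s e W.
Proof.
move=> s0 eN; apply: (stdM_interval (e := e)) => //; first exact/well_formed_restrict/mpW.1.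
by move=> x; rewrite mem_flatten_restrict_between //; lia.
Qed.

Lemma restrict_le_window t : restrict W (fun x => x <= t) = window 1 t W.
Proof.
rewrite /window shift_down0; apply: restrict_ext_in => x.
by case: mpW => _ -> /andP [x0 _]; rewrite /between x0.
Qed.

End Windows.

Lemma restrict_window_le s e m W : 0 < s -> s.-1 + m <= e ->
  restrict (window s e W) (fun y => y <= m) = window s (s.-1 + m) W.
Proof.
move=> s0 h; rewrite /window restrict_shift_down restrict_restrict.
by congr shift_down; apply: restrict_ext => x; rewrite /between /=; lia.
Qed.

Lemma window_window a b c d W : 0 < a -> 0 < c -> c.-1 + b <= d ->
  window a b (window c d W) = window (c.-1 + a) (c.-1 + b) W.
Proof.
move=> a0 c0 h; rewrite /window restrict_shift_down restrict_restrict shift_downD.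
congr shift_down; first by lia.
by apply: restrict_ext => x; rewrite /between /=; lia.
Qed.

Lemma lastblk_cover k X (P Q : pred nat) : mperm_of k X -> 0 < k ->
  (forall x, 0 < x <= k -> P x || Q x) -> has P (lastblk X) || has Q (lastblk X).
Proof.
move=> mpX k0 PQ; have [x xL xk] := lastblk_mperm_of mpX k0.
have x0 : 0 < x.
  case: mpX => _ M; suff : x \in flatten X by rewrite M => /andP [].
  by apply/flattenP; exists (lastblk X) => //; apply: mem_lastblk; case: (X) xL.
by rewrite -has_predU; apply/hasP; exists x => //; apply: PQ; rewrite x0.
Qed.

Lemma count_and_or (A B C : pred blk) W :
  count (fun b => A b && B b) W + count (fun b => (A b || B b) && C b) W =
  count (fun b => A b && (B b || C b)) W + count (fun b => B b && C b) W.
Proof.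
elim: W => [|b W IH] //=.
by move: IH; case: (A b); case: (B b); case: (C b) => /=; lia.
Qed.

Local Open Scope ring_scope.

Section FormalSums.
Variable K : fieldType.
Implicit Types (x y : alg K) (G : mperm -> K).

Definition linsum x G : K := \sum_(t <- x) t.1 * G t.2.

Definition lin_eq x y : Prop := forall G, linsum x G = linsum y G.

Lemma coef_linsum x W : coef x W = linsum x (fun U => (U == W)%:R).
Proof.
rewrite /coef /linsum big_mkcond; apply: eq_bigr => t _.
by case: eqP; rewrite ?mulr1 ?mulr0.
Qed.

Lemma eq_linsum x G1 G2 : G1 =1 G2 -> linsum x G1 = linsum x G2.
Proof. by move=> G12; apply: eq_bigr => t _; rewrite G12. Qed.

Lemma eq_linsum_valid x G1 G2 :
  valid x -> {in is_basis, G1 =1 G2} -> linsum x G1 = linsum x G2.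
Proof.
move=> /allP vx G12; rewrite /linsum big_seq [RHS]big_seq.
by apply: eq_bigr => t tx; rewrite G12 //; apply: vx.
Qed.

Lemma linsum_add x G1 G2 : linsum x (fun U => G1 U + G2 U) = linsum x G1 + linsum x G2.
Proof. by rewrite /linsum -big_split; apply: eq_bigr => t _; rewrite mulrDr. Qed.

Lemma linsum_scale x k G : linsum x (fun U => k * G U) = k * linsum x G.
Proof. by rewrite /linsum mulr_sumr; apply: eq_bigr => t _; rewrite mulrCA. Qed.

Lemma linsum_aadd x y G : linsum (aadd x y) G = linsum x G + linsum y G.
Proof. by rewrite /linsum big_cat. Qed.

Lemma linsum_ascale k x G : linsum (ascale k x) G = k * linsum x G.
Proof.
by rewrite /linsum big_map mulr_sumr; apply: eq_bigr => t _; rewrite mulrA.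
Qed.

Lemma linsum_bilin f x y G :
  linsum (bilin f x y) G = linsum x (fun A => linsum y (fun B => linsum (f A B) G)).
Proof.
rewrite /linsum /bilin big_flatten big_allpairs_dep /=.
apply: eq_bigr => a _; rewrite mulr_sumr; apply: eq_bigr => b _.
by rewrite big_map mulrA mulr_sumr; apply: eq_bigr => t _ /=; rewrite !mulrA.
Qed.

Lemma linsum_exchange x y (F : mperm -> mperm -> K) :
  linsum x (fun U => linsum y (F U)) = linsum y (fun V => linsum x (F^~ V)).
Proof.
rewrite /linsum; under eq_bigr => t _ do rewrite mulr_sumr.
rewrite exchange_big; apply: eq_bigr => r _; rewrite mulr_sumr.
by apply: eq_bigr => t _; rewrite mulrCA.
Qed.

Lemma lin_eq_bilin_l f x x' y : lin_eq x x' -> lin_eq (bilin f x y) (bilin f x' y).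
Proof. by move=> xx' G; rewrite !linsum_bilin. Qed.

Lemma lin_eq_bilin_r f x y y' : lin_eq y y' -> lin_eq (bilin f x y) (bilin f x y').
Proof. by move=> yy' G; rewrite !linsum_bilin; apply: eq_linsum => A. Qed.

Lemma lin_eq_filter_weight (s : seq (mperm * pred nat)) (P : pred (mperm * pred nat))
    (f : mperm * pred nat -> K) :
  lin_eq [seq (f WS, WS.1) | WS <- s & P WS] [seq ((P WS)%:R * f WS, WS.1) | WS <- s].
Proof.
move=> G; rewrite /linsum !big_map big_filter big_mkcond.
by apply: eq_bigr => WS _ /=; case: (P WS); rewrite ?mul1r ?mul0r.
Qed.

Lemma sum_pick (L : seq mperm) (F : mperm -> K) V : uniq L ->
  \sum_(X <- L) F X * (X == V)%:R = (V \in L)%:R * F V.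
Proof.
elim: L => [|X L IH] /=; first by rewrite big_nil mul0r.
case/andP => XL U; rewrite big_cons IH // inE.
case: (eqVneq X V) => [<-|ne] /=; first by rewrite (negbTE XL) mulr1 mul0r addr0 mul1r.
by rewrite mulr0 add0r.
Qed.

End FormalSums.

Section WeightedProducts.
Variable K : fieldType.
Local Notation weight := (bool -> bool -> nat -> K).
Implicit Types (psi chi : weight) (B C D U V W : mperm).

Definition wprod psi B D : alg K :=
  [seq (psi (has (fun x => x <= msize B)%N (lastblk WS.1)) (has WS.2 (lastblk WS.1))
        (capn (msize B) WS.1 WS.2), WS.1) | WS <- Wset B D].

Definition w_succ (q : K) : weight := fun h1 _ k => (~~ h1)%:R * q ^+ k.
Definition w_dot (q : K) : weight := fun h1 h2 k => (h1 && h2)%:R * q ^+ (k - 1).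
Definition w_prec (q : K) : weight := fun _ h2 k => (~~ h2)%:R * q ^+ k.
Definition w_tri (q : K) : weight :=
  fun h1 h2 k => w_prec q h1 h2 k + w_succ q h1 h2 k + q * w_dot q h1 h2 k.

Definition represents (f : mperm -> mperm -> alg K) psi :=
  forall B D, lin_eq (f B D) (wprod psi B D).

Lemma represents_succ q : represents (succ_b q) (w_succ q).
Proof. by move=> B D; apply: lin_eq_filter_weight. Qed.

Lemma represents_dot q : represents (dot_b q) (w_dot q).
Proof. by move=> B D; apply: lin_eq_filter_weight. Qed.

Lemma represents_prec q : represents (prec_b q) (w_prec q).
Proof. by move=> B D; apply: lin_eq_filter_weight. Qed.

Lemma linsum_wprod_tri q B D G :
  linsum (wprod (w_tri q) B D) G =
  linsum (wprod (w_prec q) B D) G + linsum (wprod (w_succ q) B D) G +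
  q * linsum (wprod (w_dot q) B D) G.
Proof.
rewrite /linsum !big_map mulr_sumr -!big_split; apply: eq_bigr => WS _ /=.
by rewrite !mulrDl mulrA.
Qed.

Lemma lin_eq_tri q (x y : alg K) :
  lin_eq (aadd (aadd (prec_q q x y) (succ_q q x y)) (ascale q (dot_q q x y)))
         (bilin (wprod (w_tri q)) x y).
Proof.
move=> G; rewrite !linsum_aadd linsum_ascale !linsum_bilin -linsum_scale -!linsum_add.
apply: eq_linsum => A; rewrite -linsum_scale -!linsum_add; apply: eq_linsum => B.
by rewrite linsum_wprod_tri represents_prec represents_succ represents_dot.
Qed.

(* The contribution of [W] to [wprod psi B D] for [msize B = n], [msize D = m]:
   [s = n.+1] gives the pairs of type (I), [s = n] those of type (II). *)
Definition wterm psi (n m : nat) B D (s : nat) W : K :=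
  let S := between s (s.-1 + m) in
  [&& W \in mperms (s.-1 + m), restrict W (fun x => x <= n)%N == B
    & stdM (restrict W S) == D]%:R *
  psi (has (fun x => x <= n)%N (lastblk W)) (has S (lastblk W)) (capn n W S).

Lemma wterm_memE psi n m B D s W :
  (W \in mperms (s.-1 + m))%:R * wterm psi n m B D s W = wterm psi n m B D s W.
Proof. by rewrite /wterm; case: (W \in _); rewrite ?mul1r ?mul0r. Qed.

Lemma sum_wterm_pick psi n m B D s (F : mperm -> K) V :
  \sum_(X <- mperms (s.-1 + m)) wterm psi n m B D s X * F X * (X == V)%:R =
  wterm psi n m B D s V * F V.
Proof. by rewrite (sum_pick _ _ (uniq_mperms _)) mulrA wterm_memE. Qed.

Lemma wterm_restrictE psi n m U D s W :
  let U0 := restrict W (fun x => x <= n)%N in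
  wterm psi n m U D s W = (U == U0)%:R * wterm psi n m U0 D s W.
Proof.
move=> U0; case: (eqVneq U U0) => [<-|ne]; first by rewrite mul1r.
by rewrite mul0r /wterm [_ == U]eq_sym (negbTE ne) andbF mul0r.
Qed.

Lemma wterm_stdME psi n m B V s W :
  let V0 := stdM (restrict W (between s (s.-1 + m))) in
  wterm psi n m B V s W = (V == V0)%:R * wterm psi n m B V0 s W.
Proof.
move=> V0; case: (eqVneq V V0) => [<-|ne]; first by rewrite mul1r.
by rewrite mul0r /wterm [_ == V]eq_sym (negbTE ne) !andbF mul0r.
Qed.

Lemma linsum_wprod psi B D F n m : msize B = n -> msize D = m -> (0 < n)%N ->
  linsum (wprod psi B D) F =
  \sum_(W <- mperms (n + m)) wterm psi n m B D n.+1 W * F W +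
  \sum_(W <- mperms (n.-1 + m)) wterm psi n m B D n W * F W.
Proof.
move=> <- <- n0; rewrite /linsum /wprod /Wset big_map big_cat !big_map !big_filter.
have -> : (msize B + msize D - 1 = (msize B).-1 + msize D)%N by lia.
congr (_ + _); rewrite big_mkcond big_seq [RHS]big_seq; apply: eq_bigr => W WN;
  by rewrite /wterm WN /=; case: ifP; rewrite ?mul1r ?mul0r.
Qed.

Definition wcoef psi B D W : K := linsum (wprod psi B D) (fun X => (X == W)%:R).

Lemma wcoefE psi B D W n m : msize B = n -> msize D = m -> (0 < n)%N ->
  wcoef psi B D W = wterm psi n m B D n.+1 W + wterm psi n m B D n W.
Proof.
move=> Bn Dm n0; rewrite /wcoef (linsum_wprod _ _ Bn Dm n0) -[(n + m)%N]/(n.+1.-1 + m)%N.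
by rewrite !(sum_pick _ _ (uniq_mperms _)) !wterm_memE.
Qed.

(* Up to the choices [s1], [s2] of types, the intermediate term of [(B * C) * D] is
   forced to be [W|_[t]], and that of [B * (C * D)] to be [std(W|_S)]. *)
Definition left_term psi1 psi2 (n m p : nat) B C D (s1 s2 : nat) W : K :=
  let t := (s1.-1 + m)%N in let U := restrict W (fun x => x <= t)%N in
  wterm psi1 n m B C s1 U * wterm psi2 t p U D (s1.-1 + s2) W.

Definition right_term chi1 chi2 (n m p : nat) B C D (s1 s2 : nat) W : K :=
  let v := (s2.-1 + p)%N in let V := stdM (restrict W (between s1 (s1.-1 + v))) in
  wterm chi2 m p C D s2 V * wterm chi1 n v B V s1 W.

(* [a], [b], [c] tell which of the ranges [[1, n]], [[s1, t]], [[s1-1+s2, N]] the last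
   block of [W] meets, [h1], [h2] (resp. [g1], [g2]) describe the last block of the
   intermediate term of the left (resp. right) iterated product, and [x], [y], [z], [w]
   are the intersection numbers. *)
Definition weights_assoc psi1 psi2 chi1 chi2 : Prop :=
  forall (a b c h1 h2 g1 g2 : bool) (x y z w : nat),
  [|| a, b | c] -> (a || b) ==> (h1 == a) && (h2 == b) -> h1 || h2 ->
  (b || c) ==> (g1 == b) && (g2 == c) -> g1 || g2 ->
  h1 && h2 ==> (0 < x)%N -> (a || b) && c ==> (0 < y)%N ->
  a && (b || c) ==> (0 < z)%N -> g1 && g2 ==> (0 < w)%N -> (x + y = z + w)%N ->
  psi1 h1 h2 x * psi2 (a || b) c y = chi1 a (b || c) z * chi2 g1 g2 w.

Lemma sum_left_term psi1 psi2 n m p B C D s1 W : msize D = p -> (0 < s1.-1 + m)%N ->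
  \sum_(U <- mperms (s1.-1 + m)) wterm psi1 n m B C s1 U * wcoef psi2 U D W =
  left_term psi1 psi2 n m p B C D s1 m.+1 W + left_term psi1 psi2 n m p B C D s1 m W.
Proof.
set t := (s1.-1 + m)%N; set r := restrict W (fun x => x <= t)%N => Dp t0.
rewrite big_seq (eq_bigr (fun U => wterm psi1 n m B C s1 U *
  (wterm psi2 t p r D t.+1 W + wterm psi2 t p r D t W) * (U == r)%:R)); last first.
  move=> U /mperm_ofP /msize_mperm_of Ut.
  rewrite (wcoefE _ _ Ut Dp t0) (wterm_restrictE _ _ _ U).
  by rewrite [wterm psi2 t p U D t W]wterm_restrictE -mulrDr mulrCA mulrC.
by rewrite -big_seq /t sum_wterm_pick mulrDr -addnS.
Qed.

Lemma sum_right_term chi1 chi2 n m p B C D s2 W : msize B = n -> (0 < n)%N ->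
  \sum_(V <- mperms (s2.-1 + p)) wterm chi2 m p C D s2 V * wcoef chi1 B V W =
  right_term chi1 chi2 n m p B C D n.+1 s2 W + right_term chi1 chi2 n m p B C D n s2 W.
Proof.
set v := (s2.-1 + p)%N => Bn n0.
set V1 := stdM (restrict W (between n.+1 (n.+1.-1 + v))).
set V0 := stdM (restrict W (between n (n.-1 + v))).
rewrite big_seq (eq_bigr (fun V =>
  wterm chi2 m p C D s2 V * wterm chi1 n v B V1 n.+1 W * (V == V1)%:R +
  wterm chi2 m p C D s2 V * wterm chi1 n v B V0 n W * (V == V0)%:R)); last first.
  move=> V /mperm_ofP /msize_mperm_of Vv.
  rewrite (wcoefE _ _ Bn Vv n0) (wterm_stdME _ _ _ _ V n.+1) (wterm_stdME _ _ _ _ V n).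
  by rewrite -/V1 -/V0 mulrDr; congr (_ + _); rewrite mulrA mulrAC.
by rewrite -big_seq big_split /v !sum_wterm_pick.
Qed.

Lemma linsum_left psi1 psi2 B C D W n m p :
  msize B = n -> msize C = m -> msize D = p -> (0 < n)%N -> (0 < m)%N ->
  linsum (wprod psi1 B C) (fun U => wcoef psi2 U D W) =
  (left_term psi1 psi2 n m p B C D n.+1 m.+1 W + left_term psi1 psi2 n m p B C D n.+1 m W) +
  (left_term psi1 psi2 n m p B C D n m.+1 W + left_term psi1 psi2 n m p B C D n m W).
Proof.
move=> Bn Cm Dp n0 m0; rewrite (linsum_wprod _ _ Bn Cm n0) -[(n + m)%N]/(n.+1.-1 + m)%N.
by rewrite !(sum_left_term _ _ _ _ _ _ Dp) //; lia.
Qed.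

Lemma linsum_right chi1 chi2 B C D W n m p :
  msize B = n -> msize C = m -> msize D = p -> (0 < n)%N -> (0 < m)%N ->
  linsum (wprod chi2 C D) (fun V => wcoef chi1 B V W) =
  (right_term chi1 chi2 n m p B C D n.+1 m.+1 W + right_term chi1 chi2 n m p B C D n m.+1 W) +
  (right_term chi1 chi2 n m p B C D n.+1 m W + right_term chi1 chi2 n m p B C D n m W).
Proof.
move=> Bn Cm Dp n0 m0; rewrite (linsum_wprod _ _ Cm Dp m0) -[(m + p)%N]/(m.+1.-1 + p)%N.
by rewrite !(sum_right_term _ _ _ _ _ _ _ _ Bn n0).
Qed.

End WeightedProducts.

Section Decomposition.
Local Open Scope nat_scope.
Variables (n m p s1 s2 : nat) (W : mperm).
Hypotheses (n_gt0 : 0 < n) (m_gt0 : 0 < m) (p_gt0 : 0 < p)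
  (s1_bounds : n <= s1 <= n.+1) (s2_bounds : m <= s2 <= m.+1).

Local Notation t := (s1.-1 + m).
Local Notation v := (s2.-1 + p).
Local Notation N := (s1.-1 + v).
Hypothesis mpW : mperm_of N W.

Local Notation U := (restrict W (fun x => x <= t)).
Local Notation V := (window s1 N W).
Local Notation L := (lastblk W).
Local Notation a := (has (fun x => x <= n) L).
Local Notation b := (has (between s1 t) L).
Local Notation c := (has (between (s1.-1 + s2) N) L).

Lemma mperm_of_left : mperm_of t U.
Proof.
rewrite (restrict_le_window mpW).
by have := window_mperm_of mpW (s := 1) (e := t); rewrite subn1; apply; lia.
Qed.

Lemma restrict_left_le : restrict U (fun x => x <= n) = restrict W (fun x => x <= n).
Proof. by rewrite restrict_restrict; apply: restrict_ext => x /=; lia. Qed.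

Lemma stdM_left : stdM (restrict U (between s1 t)) = window s1 t W.
Proof.
rewrite restrict_restrict (restrict_ext _ (_ : _ =1 between s1 t)).
  by apply: (stdM_restrict_between mpW); lia.
by move=> x; rewrite /between /=; lia.
Qed.

Lemma stdM_outer : stdM (restrict W (between (s1.-1 + s2) N)) = window (s1.-1 + s2) N W.
Proof. by apply: (stdM_restrict_between mpW); lia. Qed.

Lemma stdM_mid : stdM (restrict W (between s1 N)) = V.
Proof. by apply: (stdM_restrict_between mpW); lia. Qed.

Lemma mperm_of_right : mperm_of v V.
Proof.
have := window_mperm_of mpW (s := s1) (e := N).
have -> : N.+1 - s1 = v by lia.
by apply; lia.
Qed.

Lemma restrict_right_le : restrict V (fun x => x <= m) = window s1 t W.
Proof. by rewrite restrict_window_le //; lia. Qed.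

Lemma stdM_right : stdM (restrict V (between s2 v)) = window (s1.-1 + s2) N W.
Proof.
by rewrite (stdM_restrict_between mperm_of_right) ?window_window //; lia.
Qed.

Lemma has_le_t : has (fun x => x <= t) L = a || b.
Proof. by rewrite -has_predU; apply: eq_has => x; rewrite /between /=; lia. Qed.

Lemma has_mid : has (between s1 N) L = b || c.
Proof. by rewrite -has_predU; apply: eq_has => x; rewrite /between /=; lia. Qed.

Lemma lastblk_meets_some : [|| a, b | c].
Proof.
rewrite orbA -has_predU; apply: (lastblk_cover mpW) => [|x hx]; rewrite /between /=; lia.
Qed.

Lemma lastblk_left : a || b ->
  has (fun x => x <= n) (lastblk U) = a /\ has (between s1 t) (lastblk U) = b.
Proof.
rewrite -has_le_t => h; rewrite lastblk_restrict // !has_filter_and.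
by split; apply: eq_has => x; rewrite /between /=; lia.
Qed.

Lemma lastblk_left_meets : has (fun x => x <= n) (lastblk U) || has (between s1 t) (lastblk U).
Proof. by apply: (lastblk_cover mperm_of_left) => [|x hx]; rewrite /between; lia. Qed.

Lemma lastblk_right : b || c ->
  has (fun x => x <= m) (lastblk V) = b /\ has (between s2 v) (lastblk V) = c.
Proof.
rewrite -has_mid => h.
rewrite lastblk_shift_down lastblk_restrict // !has_map !has_filter_and.
by split; apply: eq_has => x; rewrite /between /=; lia.
Qed.

Lemma lastblk_right_meets : has (fun x => x <= m) (lastblk V) || has (between s2 v) (lastblk V).
Proof. by apply: (lastblk_cover mperm_of_right) => [|x hx]; rewrite /between; lia. Qed.

(* Each block of W is counted once on each side, according to which of the
   three ranges [1..n], [s1..t], [s1-1+s2..N] it meets. *)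
Lemma capn_decomposition :
  capn n U (between s1 t) + capn t W (between (s1.-1 + s2) N) =
  capn n W (between s1 N) + capn m V (between s2 v).
Proof.
pose A := has (fun x => x <= n); pose B := has (between s1 t).
pose C := has (between (s1.-1 + s2) N).
have -> : capn n U (between s1 t) = count (fun b => A b && B b) W.
  rewrite /capn count_restrict //; apply: eq_count => bl; rewrite !has_filter_and.
  by congr andb; apply: eq_has => x; rewrite /between /=; lia.
have -> : capn t W (between (s1.-1 + s2) N) = count (fun b => (A b || B b) && C b) W.
  rewrite /capn; apply: eq_count => bl; congr andb.
  by rewrite -has_predU; apply: eq_has => x; rewrite /between /=; lia.
have -> : capn n W (between s1 N) = count (fun b => A b && (B b || C b)) W.
  rewrite /capn; apply: eq_count => bl; congr andb.
  by rewrite -has_predU; apply: eq_has => x; rewrite /between /=; lia.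
have -> : capn m V (between s2 v) = count (fun b => B b && C b) W.
  rewrite /capn /window /shift_down count_map count_restrict //; apply: eq_count => bl.
  rewrite /preim /= !has_map !has_filter_and.
  by congr andb; apply: eq_has => x; rewrite /between /=; lia.
exact: count_and_or.
Qed.

Variable K : fieldType.
Implicit Types psi chi : bool -> bool -> nat -> K.

Lemma left_term_eq_right_term_mperm psi1 psi2 chi1 chi2 B C D :
  weights_assoc psi1 psi2 chi1 chi2 ->
  left_term psi1 psi2 n m p B C D s1 s2 W = right_term chi1 chi2 n m p B C D s1 s2 W.
Proof.
move=> wa; rewrite /left_term /right_term /wterm.
have -> : (s1.-1 + s2).-1 + p = N by lia.
rewrite stdM_mid (introT (mperm_ofP _ _) mperm_of_left) (introT (mperm_ofP _ _) mperm_of_right).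
rewrite (introT (mperm_ofP _ _) mpW) restrict_left_le stdM_left stdM_outer restrict_right_le.
rewrite stdM_right !eqxx /=.
case: (restrict W _ == B); case: (window s1 t W == C); case: (window _ N W == D);
  rewrite /= ?mul0r ?mulr0 ?mul1r //.
rewrite has_le_t has_mid [RHS]GRing.mulrC; apply: wa.
- exact: lastblk_meets_some.
- by apply/implyP => /lastblk_left [-> ->]; rewrite !eqxx.
- exact: lastblk_left_meets.
- by apply/implyP => /lastblk_right [-> ->]; rewrite !eqxx.
- exact: lastblk_right_meets.
- by apply/implyP => /andP []; apply: capn_gt0.
- by rewrite -has_le_t; apply/implyP => /andP []; apply: capn_gt0.
- by rewrite -has_mid; apply/implyP => /andP []; apply: capn_gt0.
- by apply/implyP => /andP []; apply: capn_gt0.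
- exact: capn_decomposition.
Qed.

End Decomposition.

Section Associativity.
Variable K : fieldType.
Implicit Types (psi chi : bool -> bool -> nat -> K) (x y z : alg K).

Lemma left_term_eq_right_term psi1 psi2 chi1 chi2 B C D W (n m p s1 s2 : nat) :
  weights_assoc psi1 psi2 chi1 chi2 -> (0 < n)%N -> (0 < m)%N -> (0 < p)%N ->
  (n <= s1 <= n.+1)%N -> (m <= s2 <= m.+1)%N ->
  left_term psi1 psi2 n m p B C D s1 s2 W = right_term chi1 chi2 n m p B C D s1 s2 W.
Proof.
move=> wa n0 m0 p0 hs1 hs2.
have [/mperm_ofP mpW | notW] := boolP (W \in mperms (s1.-1 + (s2.-1 + p))).
  exact: left_term_eq_right_term_mperm.
rewrite /left_term /right_term /wterm.
have -> : ((s1.-1 + s2).-1 + p = s1.-1 + (s2.-1 + p))%N by lia.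
by rewrite (negbTE notW) !andFb !mul0r !mulr0.
Qed.

Lemma wprod_assoc psi1 psi2 chi1 chi2 B C D W : weights_assoc psi1 psi2 chi1 chi2 ->
  is_basis B -> is_basis C -> is_basis D ->
  linsum (wprod psi1 B C) (fun U => wcoef psi2 U D W) =
  linsum (wprod chi2 C D) (fun V => wcoef chi1 B V W).
Proof.
move=> wa /andP [n0 _] /andP [m0 _] /andP [p0 _].
rewrite (linsum_left _ _ _ erefl erefl erefl n0 m0).
rewrite (linsum_right _ _ _ erefl erefl erefl n0 m0).
have LR s1 s2 : (msize B <= s1 <= (msize B).+1)%N -> (msize C <= s2 <= (msize C).+1)%N ->
    left_term psi1 psi2 (msize B) (msize C) (msize D) B C D s1 s2 W =
    right_term chi1 chi2 (msize B) (msize C) (msize D) B C D s1 s2 W.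
  by move=> hs1 hs2; apply: left_term_eq_right_term.
by rewrite !LR ?leqnn ?leqnSn // addrACA.
Qed.

Lemma aeq_bilin_assoc x y z f g f' g' psi1 psi2 chi1 chi2 :
  valid x -> valid y -> valid z -> weights_assoc psi1 psi2 chi1 chi2 ->
  represents g psi1 -> represents f psi2 -> represents f' chi1 -> represents g' chi2 ->
  aeq (bilin f (bilin g x y) z) (bilin f' x (bilin g' y z)).
Proof.
move=> vx vy vz wa gr fr f'r g'r W; rewrite !coef_linsum !linsum_bilin.
apply: eq_linsum_valid => // A bA; rewrite linsum_bilin.
apply: eq_linsum_valid => // B bB; rewrite linsum_exchange.
apply: eq_linsum_valid => // D bD; rewrite gr g'r.
rewrite (eq_linsum _ (fun U => fr U D _)) (eq_linsum _ (fun V => f'r A V _)).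
exact: wprod_assoc.
Qed.

Lemma aeq_lin_eq_l x y z : lin_eq x y -> aeq y z -> aeq x z.
Proof. by move=> xy yz W; rewrite coef_linsum xy -coef_linsum. Qed.

Lemma aeq_lin_eq_r x y z : aeq x y -> lin_eq z y -> aeq x z.
Proof. by move=> xy zy W; rewrite xy coef_linsum -zy -coef_linsum. Qed.

Lemma tridendriform_weights (q : K) :
  [/\ weights_assoc (w_prec q) (w_prec q) (w_prec q) (w_tri q),
      weights_assoc (w_succ q) (w_prec q) (w_succ q) (w_prec q),
      weights_assoc (w_tri q) (w_succ q) (w_succ q) (w_succ q) &
      weights_assoc (w_dot q) (w_dot q) (w_dot q) (w_dot q)] /\
  [/\ weights_assoc (w_succ q) (w_dot q) (w_succ q) (w_dot q),
      weights_assoc (w_prec q) (w_dot q) (w_dot q) (w_succ q) &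
      weights_assoc (w_dot q) (w_prec q) (w_dot q) (w_prec q)].
Proof.
split; split=> a b c h1 h2 g1 g2 x y z w;
  case: a b c h1 h2 g1 g2 => [] [] [] [] [] [] [] //= _ _ _ _ _ x0 y0 z0 w0 xyzw;
  rewrite /w_tri /w_succ /w_dot /w_prec /= ?(mul0r, mulr0, mul1r, mulr1, add0r, addr0) //;
  by rewrite -?exprS -?exprD; congr (_ ^+ _); lia.
Qed.

End Associativity.

Theorem proposition3p3 (K : fieldType) (q : K) :
  q_tridendriform (fun x : alg K => valid x) (@aeq K) (@aadd K) (@ascale K) q
    (prec_q q) (dot_q q) (succ_q q).
Proof.
move=> a b c va vb vc.
have [[w1 w2 w3 w4] [w5 w6 w7]] := tridendriform_weights q.
have rs := represents_succ q.
have rd := represents_dot q.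
have rp := represents_prec q.
have rt : represents (wprod (w_tri q)) (w_tri q) by [].
have tri_bc := lin_eq_bilin_r (prec_b q) a (lin_eq_tri q b c).
have tri_ab := lin_eq_bilin_l (succ_b q) c (lin_eq_tri q a b).
split; [|split; [|split; [|split; [|split; [|split]]]]].
- exact: aeq_lin_eq_r (aeq_bilin_assoc va vb vc w1 rp rp rp rt) tri_bc.
- exact: (aeq_bilin_assoc va vb vc w2 rs rp rs rp).
- exact: aeq_lin_eq_l tri_ab (aeq_bilin_assoc va vb vc w3 rt rs rs rs).
- exact: (aeq_bilin_assoc va vb vc w4 rd rd rd rd).
- exact: (aeq_bilin_assoc va vb vc w5 rs rd rs rd).
- exact: (aeq_bilin_assoc va vb vc w6 rp rd rd rs).
- exact: (aeq_bilin_assoc va vb vc w7 rd rp rd rp).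
Qed.
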